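(* For every integer $N\ge3$ and every integer $w$ with $\gcd(w,N)=1$, \[ \frac1{N^2}\sum_{h=1}^{N-1}\frac{\cot^2(\pi hw/N)}{h^2}>\frac1{6N^2}. \] *)

From Stdlib Require Import Reals ZArith Znumtheory.
Open Scope R_scope.
Definition cot (x : R) : R := cos x / sin x.

From Stdlib Require Import Reals ZArith Znumtheory Lia Psatz.
Open Scope R_scope.

(* Let a be the inverse of w modulo N, with 1 <= a < N. The angles pi a w / N and
   pi (N - a) w / N are congruent to pi / N and - pi / N modulo pi, so the terms h = a and
   h = N - a of the sum are cot(pi/N)^2 / a^2 and cot(pi/N)^2 / (N - a)^2; they are distinct
   because N >= 3. As 1/a^2 + 1/b^2 >= 8/(a + b)^2 and cot(pi/N) > N/(2 pi) (from sin x < x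
   and cos x >= 1/2 on (0, pi/3]), the sum exceeds 8/(4 pi^2) = 2/pi^2 > 1/6, since pi^2 < 12. *)

Lemma cot_add_IZR_PI x k : cot (x + IZR k * PI) = cot x.
Proof.
  (* No hypothesis on [sin x] is needed: [Rinv_mult] holds even when [sin x = 0]. *)
  assert (sin_kPI : sin (IZR k * PI) = 0) by (apply sin_eq_0_1; exists k; reflexivity).
  assert (cos_kPI : cos (IZR k * PI) <> 0).
  { intro H. pose proof (sin2_cos2 (IZR k * PI)) as E.
    rewrite sin_kPI, H in E. unfold Rsqr in E. lra. }
  unfold cot. rewrite sin_plus, cos_plus, sin_kPI, !Rmult_0_r, Rminus_0_r, Rplus_0_r.
  unfold Rdiv. rewrite Rinv_mult.
  replace (cos x * cos (IZR k * PI) * (/ sin x * / cos (IZR k * PI)))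
    with (cos x * / sin x * (cos (IZR k * PI) * / cos (IZR k * PI))) by ring.
  rewrite Rinv_r by exact cos_kPI. ring.
Qed.

Lemma cot_opp x : cot (- x) = - cot x.
Proof. unfold cot, Rdiv. rewrite cos_neg, sin_neg, Rinv_opp. ring. Qed.

Lemma cot_gt_inv_double x : 0 < x <= PI / 3 -> / (2 * x) < cot x.
Proof.
  intros [x_pos x_le].
  pose proof PI_RGT_0.
  assert (sin_pos : 0 < sin x) by (apply sin_gt_0; lra).
  assert (sin_lt : sin x < x) by (apply sin_lt_x; exact x_pos).
  assert (cos_ge : 1 / 2 <= cos x).
  { rewrite <- cos_PI3. destruct (Rle_lt_or_eq_dec _ _ x_le) as [Hlt | ->].
    - left. apply cos_decreasing_1; lra.
    - lra. }
  unfold cot. apply Rlt_le_trans with (/ (2 * sin x)).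
  - apply Rinv_lt_contravar; nra.
  - apply (Rmult_le_reg_r (2 * sin x)); [lra|].
    field_simplify; lra.
Qed.

Lemma cot_PI_div_gt n : 3 <= n -> n < 2 * PI * cot (PI / n).
Proof.
  intros n_ge3. pose proof PI_RGT_0.
  assert (PI_div_n : 0 < PI / n <= PI / 3).
  { split; [apply Rdiv_lt_0_compat; lra|].
    apply Rmult_le_compat_l; [lra | apply Rinv_le_contravar; lra]. }
  pose proof (cot_gt_inv_double _ PI_div_n) as cot_gt.
  replace (/ (2 * (PI / n))) with (n / (2 * PI)) in cot_gt by (field; lra).
  apply (Rmult_lt_compat_l (2 * PI)) in cot_gt; [|lra].
  replace (2 * PI * (n / (2 * PI))) with n in cot_gt by (field; lra). exact cot_gt.
Qed.

Lemma PI_sqr_lt_12 : PI ^ 2 < 12.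
Proof.
  destruct (PI_ineq 2) as [_ H]. unfold tg_alt, PI_tg in H. simpl in H.
  pose proof PI_RGT_0. nra.
Qed.

Lemma inv_sqr_add_ge a b : 0 < a -> 0 < b -> 8 / (a + b) ^ 2 <= / a ^ 2 + / b ^ 2.
Proof.
  intros a_pos b_pos.
  assert (E : / a ^ 2 + / b ^ 2 - 8 / (a + b) ^ 2
           = (a - b) ^ 2 * (a ^ 2 + 4 * a * b + b ^ 2) / (a ^ 2 * b ^ 2 * (a + b) ^ 2))
    by (field; lra).
  enough (0 <= (a - b) ^ 2 * (a ^ 2 + 4 * a * b + b ^ 2) / (a ^ 2 * b ^ 2 * (a + b) ^ 2)) by lra.
  apply Rmult_le_pos; [apply Rmult_le_pos; [apply pow2_ge_0 | nra]|].
  apply Rlt_le, Rinv_0_lt_compat.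
  apply Rmult_lt_0_compat; [apply Rmult_lt_0_compat|]; apply pow_lt; lra.
Qed.

Lemma sum_f_R0_ge_term (f : nat -> R) n i :
  (forall k, 0 <= f k) -> (i <= n)%nat -> f i <= sum_f_R0 f n.
Proof.
  intros f_nonneg. induction n as [|n IH]; intros i_le; simpl.
  - replace i with 0%nat by lia. lra.
  - destruct (Nat.eq_dec i (S n)) as [-> | i_ne].
    + pose proof (cond_pos_sum f n f_nonneg). lra.
    + pose proof (IH ltac:(lia)). pose proof (f_nonneg (S n)). lra.
Qed.

Lemma sum_f_R0_ge_two_terms (f : nat -> R) n i j :
  (forall k, 0 <= f k) -> (i <= n)%nat -> (j <= n)%nat -> i <> j ->
  f i + f j <= sum_f_R0 f n.
Proof.
  intros f_nonneg. induction n as [|n IH]; intros i_le j_le i_ne_j; simpl; [lia|].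
  destruct (Nat.eq_dec i (S n)) as [-> | i_ne]; [|destruct (Nat.eq_dec j (S n)) as [-> | j_ne]].
  - pose proof (sum_f_R0_ge_term f n j f_nonneg ltac:(lia)). lra.
  - pose proof (sum_f_R0_ge_term f n i f_nonneg ltac:(lia)). lra.
  - pose proof (IH ltac:(lia) ltac:(lia) i_ne_j). pose proof (f_nonneg (S n)). lra.
Qed.

Lemma sum_f_ge_two_terms (f : nat -> R) s n i j :
  (forall k, 0 <= f k) -> (s <= i <= n)%nat -> (s <= j <= n)%nat -> i <> j ->
  f i + f j <= sum_f s n f.
Proof.
  intros f_nonneg i_range j_range i_ne_j. unfold sum_f.
  replace (f i + f j) with (f (i - s + s)%nat + f (j - s + s)%nat)
    by (f_equal; f_equal; lia).
  apply (sum_f_R0_ge_two_terms (fun x => f (x + s)%nat)); [intro; apply f_nonneg | lia..].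
Qed.

Lemma Z_inverse_mod_nat (N : nat) (w : Z) :
  (2 <= N)%nat -> Z.gcd w (Z.of_nat N) = 1%Z ->
  exists (a : nat) (k : Z), (1 <= a < N)%nat /\ (Z.of_nat a * w = 1 + k * Z.of_nat N)%Z.
Proof.
  intros N_ge2 gcd_1.
  destruct (Zis_gcd_bezout _ _ _ (Zgcd_is_gcd w (Z.of_nat N))) as [u v bezout].
  rewrite gcd_1 in bezout.
  pose proof (Z.mod_pos_bound u (Z.of_nat N) ltac:(lia)).
  pose proof (Z.div_mod u (Z.of_nat N) ltac:(lia)).
  set (r := (u mod Z.of_nat N)%Z) in *. set (k := (- v - u / Z.of_nat N * w)%Z).
  assert (inv : (r * w = 1 + k * Z.of_nat N)%Z) by (unfold k; nia).
  assert (r_ne0 : r <> 0%Z).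
  { intro r_0. rewrite r_0 in inv. destruct (Z_le_gt_dec 0 k); nia. }
  exists (Z.to_nat r), k. rewrite Z2Nat.id by lia. split; [lia | exact inv].
Qed.

Lemma inverse_mod_neq_half (N a : nat) (w k : Z) :
  (3 <= N)%nat -> (Z.of_nat a * w = 1 + k * Z.of_nat N)%Z -> (2 * a <> N)%nat.
Proof.
  intros N_ge3 inv N_eq. subst N.
  assert (unit : (Z.of_nat a * (w - 2 * k) = 1)%Z) by nia.
  destruct (Z_le_gt_dec (w - 2 * k) 0); nia.
Qed.

Lemma cot_sqr_PI_mul_div_of_inverse (n h : nat) (w k : Z) :
  (0 < n)%nat ->
  (Z.of_nat h * w = 1 + k * Z.of_nat n \/ Z.of_nat h * w = -1 + k * Z.of_nat n)%Z ->
  cot (PI * INR h * IZR w / INR n) ^ 2 = cot (PI / INR n) ^ 2.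
Proof.
  intros n_pos congr. assert (INR n <> 0) by (apply not_0_INR; lia).
  replace (PI * INR h * IZR w) with (PI * IZR (Z.of_nat h * w))
    by (rewrite mult_IZR, <- INR_IZR_INZ; ring).
  destruct congr as [-> | ->]; rewrite plus_IZR, mult_IZR, <- INR_IZR_INZ.
  - replace (PI * (1 + IZR k * INR n) / INR n) with (PI / INR n + IZR k * PI)
      by (field; assumption).
    now rewrite cot_add_IZR_PI.
  - replace (PI * (-1 + IZR k * INR n) / INR n) with (- (PI / INR n) + IZR k * PI)
      by (field; assumption).
    rewrite cot_add_IZR_PI, cot_opp. ring.
Qed.

Theorem lemma2 (N : nat) (w : Z) :
  (3 <= N)%nat -> Z.gcd w (Z.of_nat N) = 1%Z ->
  / (INR N ^ 2) *
    sum_f 1 (N - 1)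
      (fun h => (cot (PI * INR h * IZR w / INR N)) ^ 2 / (INR h ^ 2))
  > / (6 * INR N ^ 2).
Proof.
  intros N_ge3 gcd_1.
  destruct (Z_inverse_mod_nat N w ltac:(lia) gcd_1) as (a & k & a_range & inv).
  set (F := fun h => (cot (PI * INR h * IZR w / INR N)) ^ 2 / (INR h ^ 2)).
  set (c := cot (PI / INR N)).
  assert (F_a : F a = c ^ 2 / INR a ^ 2).
  { unfold F, c. rewrite (cot_sqr_PI_mul_div_of_inverse N a w k); [reflexivity | lia | now left]. }
  assert (F_N_a : F (N - a)%nat = c ^ 2 / INR (N - a) ^ 2).
  { unfold F, c. rewrite (cot_sqr_PI_mul_div_of_inverse N (N - a) w (w - k)); [reflexivity | lia |].
    right. rewrite Nat2Z.inj_sub by lia. nia. }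
  assert (two_terms : F a + F (N - a)%nat <= sum_f 1 (N - 1) F).
  { pose proof (inverse_mod_neq_half N a w k N_ge3 inv).
    apply sum_f_ge_two_terms; [|lia..].
    intro h. unfold F, Rdiv. rewrite <- pow_inv. apply Rmult_le_pos; apply pow2_ge_0. }
  assert (power_mean : 8 / INR N ^ 2 <= / INR a ^ 2 + / INR (N - a) ^ 2).
  { replace (INR N) with (INR a + INR (N - a)) by (rewrite <- plus_INR; f_equal; lia).
    apply inv_sqr_add_ge; apply lt_0_INR; lia. }
  assert (N_ge3_R : 3 <= INR N) by (apply (le_INR 3) in N_ge3; simpl in N_ge3; lra).
  assert (N_sqr_lt : INR N ^ 2 < 48 * c ^ 2).
  { pose proof (cot_PI_div_gt (INR N) N_ge3_R) as cot_gt. fold c in cot_gt.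
    pose proof PI_sqr_lt_12. pose proof (pow2_ge_0 c). nra. }
  assert (sum_gt : / 6 < sum_f 1 (N - 1) F).
  { apply Rlt_le_trans with (c ^ 2 * (8 / INR N ^ 2)).
    - apply (Rmult_lt_reg_r (6 * INR N ^ 2)); [nra|]. field_simplify; lra.
    - rewrite F_a, F_N_a in two_terms. unfold Rdiv in *. rewrite <- Rmult_plus_distr_l in two_terms.
      pose proof (pow2_ge_0 c). nra. }
  apply Rlt_gt. rewrite Rinv_mult, Rmult_comm.
  apply Rmult_lt_compat_l; [apply Rinv_0_lt_compat, pow_lt; lra | exact sum_gt].
Qed.
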